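(* Let $(X,d,\kappa)$ be a digital metric space, where $d$ is any $\ell_p$ metric, and let $f,g: X \to X$. Then $f$ is $g$-intimate if and only if for every sequence $\{x_n\}_{n=1}^\infty \subset X$ such that $\lim_{n\to\infty} f(x_n) = \lim_{n\to\infty} g(x_n) = t$ for some $t \in X$, we have, for $n$ sufficiently large, $d(g(t),t) \le d(f(t),t)$.
   Context: A digital metric space is a triple $(X,d,\kappa)$ with $X\subset\mathbb{Z}^n$, $\kappa$ an adjacency relation on $X$, and $d$ a metric on $X$. The $\ell_p$ metric ($1\le p\le\infty$) is $d(x,y) = (\sum_i |x_i-y_i|^p)^{1/p}$ for $p<\infty$ and $\max_i|x_i-y_i|$ for $p=\infty$. Limits are taken with respect to $d$. Let $\alpha$ denote either the $\liminf_{n\to\infty}$ or the $\limsup_{n\to\infty}$ operation. For $f,g: X\to X$, $f$ is $g$-intimate if for every sequence $\{x_n\} \subset X$ with $\lim_{n\to\infty} f(x_n) = \lim_{n\to\infty} g(x_n) = t$ for some $t\in X$ we have (in the paper's wording, ''for $n$ sufficiently large'') $\alpha\, d(g(f(x_n)), g(x_n)) \le \alpha\, d(f(f(x_n)), f(x_n))$. *)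

From HB Require Import structures.
From mathcomp Require Import all_boot all_order all_algebra.
From mathcomp Require Import all_classical all_reals all_analysis.
Set Implicit Arguments. Unset Strict Implicit. Unset Printing Implicit Defensive.
Import Order.TTheory GRing.Theory Num.Theory.
Local Open Scope ring_scope.
Local Open Scope classical_set_scope.

Definition lp_dist (R : realType) (n : nat) (p : \bar R)
    (x y : 'rV[int]_n) : R :=
  match p with
  | EFin r => (\sum_(i < n) (`|((x ord0 i - y ord0 i)%:~R : R)| `^ r)) `^ r^-1
  | _ => \big[Num.max/0]_(i < n) `|((x ord0 i - y ord0 i)%:~R : R)|
  end.

Definition dconv (R : realType) (P : Type) (d : P -> P -> R)
    (u : nat -> P) (t : P) : Prop :=
  forall e : R, 0 < e -> exists N : nat, forall m : nat, (N <= m)%N -> d (u m) t < e.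

Definition alpha_op (R : realType) (alpha : bool) (u : nat -> \bar R) : \bar R :=
  if alpha then limn_esup u else limn_einf u.

Definition intimate (R : realType) (P : Type) (alpha : bool) (d : P -> P -> R)
    (X : set P) (f g : P -> P) : Prop :=
  forall (x : nat -> P) (t : P),
    (forall m, X (x m)) -> X t ->
    dconv d (fun m => f (x m)) t -> dconv d (fun m => g (x m)) t ->
    (alpha_op alpha (fun m => (d (g (f (x m))) (g (x m)))%:E)
       <= alpha_op alpha (fun m => (d (f (f (x m))) (f (x m)))%:E))%E.

(* In Z^n every l_p distance between distinct points is at least 1, so a
   sequence converging to t is eventually equal to t.  Hence when f (x m) and
   g (x m) both converge to t, the sequences d (g (f (x m))) (g (x m)) and
   d (f (f (x m))) (f (x m)) are eventually the constants d (g t) t and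
   d (f t) t, which are then their liminf and limsup: g-intimacy of f reduces
   to the inequality d (g t) t <= d (f t) t. *)
From HB Require Import structures.
From mathcomp Require Import all_boot all_order all_algebra.
From mathcomp Require Import all_classical all_reals all_analysis.
Import Order.TTheory GRing.Theory Num.Theory.
Local Open Scope ring_scope.
Local Open Scope classical_set_scope.

Lemma alpha_op_near_cst (R : realType) (alpha : bool) (u : nat -> \bar R)
    (c : \bar R) :
  (\forall m \near \oo, u m = c) -> alpha_op alpha u = c.
Proof.
move=> u_c; have /cvg_limn_einf_sup[] : u @ \oo --> c by exact: cvg_near_cst.
by case: alpha.
Qed.

Section UniformlyDiscrete.
Context {R : realType} {P : eqType} {d : P -> P -> R} {delta : R}.
Hypothesis delta_gt0 : 0 < delta.
Hypothesis d_sep : forall x y, x != y -> delta <= d x y.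

Lemma dconv_near_eq (u : nat -> P) (t : P) :
  dconv d u t -> \forall m \near \oo, u m = t.
Proof.
move=> /(_ _ delta_gt0) [N uN]; exists N => // m /uN.
by apply: contraTeq => /d_sep; rewrite leNgt.
Qed.

Lemma intimate_discreteE (alpha : bool) (X : set P) (f g : P -> P) :
  intimate alpha d X f g <->
  (forall (x : nat -> P) (t : P), (forall m, X (x m)) -> X t ->
     dconv d (fun m => f (x m)) t -> dconv d (fun m => g (x m)) t ->
     d (g t) t <= d (f t) t).
Proof.
have alpha_opE x t : dconv d (fun m => f (x m)) t ->
    dconv d (fun m => g (x m)) t ->
    alpha_op alpha (fun m => (d (g (f (x m))) (g (x m)))%:E) = (d (g t) t)%:E
    /\ alpha_op alpha (fun m => (d (f (f (x m))) (f (x m)))%:E) = (d (f t) t)%:E.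
  move=> /dconv_near_eq fx_t /dconv_near_eq gx_t.
  by split; apply: alpha_op_near_cst;
    apply: filterS2 fx_t gx_t => m -> gx_m; rewrite ?gx_m.
split=> fg x t Xx Xt fx_t gx_t; have [gE fE] := alpha_opE x t fx_t gx_t.
- by rewrite -lee_fin -gE -fE; exact: fg x t Xx Xt fx_t gx_t.
- by rewrite gE fE lee_fin; exact: fg x t Xx Xt fx_t gx_t.
Qed.

End UniformlyDiscrete.

Lemma powR_ge1 {R : realType} (a r : R) : 1 <= a -> 0 <= r -> 1 <= a `^ r.
Proof. by move=> a_ge1 r_ge0; rewrite -(powRr0 a) ler_powR. Qed.

Lemma lp_dist_ge1 {R : realType} {n : nat} {p : \bar R} : (1 <= p)%E ->
  forall x y : 'rV[int]_n, x != y -> 1 <= lp_dist p x y.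
Proof.
move=> p_ge1 x y xy.
have [i xy_i] : exists i, x ord0 i != y ord0 i.
  apply/existsP; apply: contraNT xy; rewrite negb_exists => /forallP xy_eq.
  by apply/eqP/rowP => j; apply/eqP/negPn/xy_eq.
pose D (j : 'I_n) : R := `|(x ord0 j - y ord0 j)%:~R|.
have D_ge1 : 1 <= D i by rewrite norm_intr_ge1 ?intr_int // intr_eq0 subr_eq0.
case: p p_ge1 => [r | |] //= r_ge1; last exact: le_trans D_ge1 (le_bigmax _ D i).
have r_gt0 : 0 < r by apply: lt_le_trans ltr01 _; rewrite -lee_fin.
apply: powR_ge1; last by rewrite invr_ge0 ltW.
rewrite (bigD1 i) //=; apply: le_trans (powR_ge1 _ _ D_ge1 (ltW r_gt0)) _.
by rewrite lerDl sumr_ge0 // => j _; exact: powR_ge0.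
Qed.

Theorem mainTheorem10 (R : realType) (n : nat) (X : set 'rV[int]_n)
    (kappa : rel 'rV[int]_n) (p : \bar R) (hp : (1 <= p)%E)
    (alpha : bool) (f g : 'rV[int]_n -> 'rV[int]_n)
    (hf : forall x, X x -> X (f x)) (hg : forall x, X x -> X (g x)) :
  intimate alpha (lp_dist p) X f g <->
  (forall (x : nat -> 'rV[int]_n) (t : 'rV[int]_n),
     (forall m, X (x m)) -> X t ->
     dconv (lp_dist p) (fun m => f (x m)) t ->
     dconv (lp_dist p) (fun m => g (x m)) t ->
     lp_dist p (g t) t <= lp_dist p (f t) t).
Proof.
exact: intimate_discreteE ltr01 (lp_dist_ge1 hp) alpha X f g.
Qed.
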